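(* Let $z,x,y\in[0,1]$ with $z=x+y$, and let $z=(z_0.z_1z_2\ldots)_2$, $x=(x_0.x_1x_2\ldots)_2$, $y=(y_0.y_1y_2\ldots)_2$ be concise binary expansions. Let $\ell\ge0$ be an index. If $x_\ell y_\ell z_\ell\in\{000,011,101,110\}$ and $z_j=0$ for all $j>\ell$, then $x_j=y_j=0$ for all $j>\ell$.
   Context: A concise binary expansion of a real number is a binary representation $(z_0.z_1z_2\ldots)_2=\sum_{i\ge0}z_i2^{-i}$ with $z_i\in\{0,1\}$ that does not end in an infinite string of 1s. $x_\ell y_\ell z_\ell$ denotes the concatenation of the three bits. *)

From Stdlib Require Import Reals.
Open Scope R_scope.

(* A concise binary expansion of r: r = sum_{i>=0} b_i 2^{-i}, b_i in {0,1},
   and the digit sequence does not end in an infinite string of 1s. *)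
Definition concise_binary_expansion (b : nat -> nat) (r : R) : Prop :=
  (forall i, b i = 0%nat \/ b i = 1%nat) /\
  (forall N, exists j, (j >= N)%nat /\ b j = 0%nat) /\
  infinite_sum (fun i => INR (b i) / 2 ^ i) r.

(* Scale by 2^l.  The integers X, Y, Z read off the first l+1 digits of x, y, z
   satisfy X <= 2^l x < X + 1 and Y <= 2^l y < Y + 1, while 2^l z = Z since z has
   no nonzero digit after l.  Thus Z = X + Y or Z = X + Y + 1, and the second case
   is excluded by parity: the last bits of X, Y, Z are x_l, y_l, z_l, and the digit
   condition says exactly that x_l + y_l + z_l is even.  From Z = X + Y the two
   lower bounds are equalities, so x = X / 2^l and y = Y / 2^l, and a concise
   expansion of such a number has no nonzero digit after l. *)

From Stdlib Require Import Reals Lra Lia.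
Open Scope R_scope.

Lemma Un_cv_le_eventually (u : nat -> R) (l c : R) (N : nat) :
  Un_cv u l -> (forall n, (n >= N)%nat -> u n <= c) -> l <= c.
Proof.
  intros Hu Hle. destruct (Rle_lt_dec l c) as [Hlc | Hcl]; [exact Hlc |].
  destruct (Hu (l - c)) as [M HM]; [lra |].
  specialize (HM (max N M) (Nat.le_max_r _ _)).
  specialize (Hle (max N M) (Nat.le_max_l _ _)).
  unfold Rdist in HM. apply Rabs_def2 in HM. lra.
Qed.

Lemma integral_sum_no_carry (u v : R) (a b c : nat) :
  INR a <= u < INR a + 1 -> INR b <= v < INR b + 1 -> u + v = INR c ->
  c <> (a + b + 1)%nat -> u = INR a /\ v = INR b.
Proof.
  intros Hu Hv Huv Hc.
  assert (Hlow : (a + b <= c)%nat).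
  { apply INR_le. rewrite plus_INR. lra. }
  assert (Hhigh : (c < a + b + 2)%nat).
  { apply INR_lt. rewrite !plus_INR. simpl (INR 2). lra. }
  assert (Hab : c = (a + b)%nat) by lia.
  rewrite Hab, plus_INR in Huv. lra.
Qed.

Lemma Rinv_pow2_succ (n : nat) : / 2 ^ S n = / 2 ^ n / 2.
Proof. simpl. assert (0 < 2 ^ n) by (apply pow_lt; lra). field. lra. Qed.

Definition digit_term (b : nat -> nat) (i : nat) : R := INR (b i) / 2 ^ i.

Fixpoint binary_prefix (b : nat -> nat) (n : nat) : nat :=
  match n with
  | O => b O
  | S k => 2 * binary_prefix b k + b (S k)
  end.

Lemma sum_digit_term_prefix (b : nat -> nat) (n : nat) :
  sum_f_R0 (digit_term b) n = INR (binary_prefix b n) / 2 ^ n.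
Proof.
  induction n as [| n IH].
  - unfold digit_term. simpl. lra.
  - rewrite tech5, IH. unfold digit_term.
    change (binary_prefix b (S n)) with (2 * binary_prefix b n + b (S n))%nat.
    change (2 ^ S n) with (2 * 2 ^ n).
    rewrite plus_INR, mult_INR. simpl (INR 2).
    assert (0 < 2 ^ n) by (apply pow_lt; lra). field. lra.
Qed.

Lemma binary_prefix_parity (b : nat -> nat) (n : nat) :
  exists q, binary_prefix b n = (2 * q + b n)%nat.
Proof. destruct n as [| n]; simpl; [exists 0%nat | exists (binary_prefix b n)]; lia. Qed.

Lemma binary_prefix_no_carry (bx by_ bz : nat -> nat) (n : nat) :
  Nat.Even (bx n + by_ n + bz n) ->
  binary_prefix bz n <> (binary_prefix bx n + binary_prefix by_ n + 1)%nat.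
Proof.
  intros [m Hm].
  destruct (binary_prefix_parity bx n) as [qx ->].
  destruct (binary_prefix_parity by_ n) as [qy ->].
  destruct (binary_prefix_parity bz n) as [qz ->].
  lia.
Qed.

Section BinaryDigits.

Variable b : nat -> nat.
Hypothesis b_binary : forall i, b i = 0%nat \/ b i = 1%nat.

Lemma digit_term_bounds (i : nat) : 0 <= digit_term b i <= / 2 ^ i.
Proof.
  assert (0 < / 2 ^ i) by (apply Rinv_0_lt_compat, pow_lt; lra).
  unfold digit_term, Rdiv. destruct (b_binary i) as [-> | ->]; simpl; lra.
Qed.

Lemma digit_sum_growing : Un_growing (sum_f_R0 (digit_term b)).
Proof. intro n. simpl. pose proof (digit_term_bounds (S n)). lra. Qed.

Lemma digit_sum_tail_le (l n : nat) : (l <= n)%nat ->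
  sum_f_R0 (digit_term b) n <= sum_f_R0 (digit_term b) l + / 2 ^ l - / 2 ^ n.
Proof.
  induction 1 as [| n _ IH]; [lra |].
  simpl sum_f_R0. pose proof (digit_term_bounds (S n)).
  rewrite Rinv_pow2_succ in *. lra.
Qed.

End BinaryDigits.

Lemma concise_expansion_sum_bounds (b : nat -> nat) (r : R) (l : nat) :
  concise_binary_expansion b r ->
  sum_f_R0 (digit_term b) l <= r < sum_f_R0 (digit_term b) l + / 2 ^ l.
Proof.
  intros [Hb [Hzero Hsum]]. change (infinite_sum (digit_term b) r) in Hsum.
  pose proof (digit_sum_growing b Hb) as Hgrow.
  split; [exact (growing_ineq _ _ Hgrow Hsum l) |].
  (* Strictness comes from a zero digit after l, which conciseness provides. *)
  destruct (Hzero (S l)) as [[| k] [Hk Hbk]]; [lia |].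
  assert (Hr : r <= sum_f_R0 (digit_term b) l + / 2 ^ l - / 2 ^ S k).
  { assert (Hskip : sum_f_R0 (digit_term b) (S k) = sum_f_R0 (digit_term b) k).
    { rewrite tech5. unfold digit_term at 2. rewrite Hbk. simpl INR. unfold Rdiv. ring. }
    apply (Un_cv_le_eventually _ _ _ (S k) Hsum). intros n Hn.
    pose proof (digit_sum_tail_le b Hb (S k) n Hn).
    pose proof (digit_sum_tail_le b Hb l k ltac:(lia)).
    assert (0 < / 2 ^ n) by (apply Rinv_0_lt_compat, pow_lt; lra).
    rewrite Rinv_pow2_succ in *. lra. }
  assert (0 < / 2 ^ S k) by (apply Rinv_0_lt_compat, pow_lt; lra).
  lra.
Qed.

Lemma concise_expansion_prefix_bounds (b : nat -> nat) (r : R) (l : nat) :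
  concise_binary_expansion b r ->
  INR (binary_prefix b l) <= 2 ^ l * r < INR (binary_prefix b l) + 1.
Proof.
  intro C. pose proof (concise_expansion_sum_bounds b r l C) as Hbounds.
  rewrite sum_digit_term_prefix in Hbounds.
  assert (Hp : 0 < 2 ^ l) by (apply pow_lt; lra).
  assert (Hinv : 2 ^ l * / 2 ^ l = 1) by (field; lra).
  set (q := INR (binary_prefix b l) / 2 ^ l) in Hbounds.
  replace (INR (binary_prefix b l)) with (2 ^ l * q) by (unfold q; field; lra).
  split; nra.
Qed.

Lemma scaled_prefix_eq (b : nat -> nat) (r : R) (l : nat) :
  2 ^ l * r = INR (binary_prefix b l) <-> r = sum_f_R0 (digit_term b) l.
Proof.
  rewrite sum_digit_term_prefix.
  assert (Hp : 0 < 2 ^ l) by (apply pow_lt; lra).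
  split; intro Hr; [rewrite <- Hr | rewrite Hr]; field; lra.
Qed.

Lemma concise_expansion_terminating (b : nat -> nat) (r : R) (l : nat) :
  concise_binary_expansion b r -> (forall j, (j > l)%nat -> b j = 0%nat) ->
  2 ^ l * r = INR (binary_prefix b l).
Proof.
  intros C Hzero. apply scaled_prefix_eq.
  pose proof (concise_expansion_sum_bounds b r l C) as [Hge _].
  destruct C as [_ [_ Hsum]]. change (infinite_sum (digit_term b) r) in Hsum.
  apply Rle_antisym; [| exact Hge].
  apply (Un_cv_le_eventually _ _ _ l Hsum). intros n Hn.
  induction Hn as [| n Hn IH]; [lra |].
  rewrite tech5. unfold digit_term at 2. rewrite Hzero by lia. simpl INR. lra.
Qed.

Lemma concise_expansion_digits_vanish (b : nat -> nat) (r : R) (l : nat) :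
  concise_binary_expansion b r -> 2 ^ l * r = INR (binary_prefix b l) ->
  forall j, (j > l)%nat -> b j = 0%nat.
Proof.
  intros [Hb [_ Hsum]] Hr j Hj. change (infinite_sum (digit_term b) r) in Hsum.
  apply scaled_prefix_eq in Hr.
  destruct (Hb j) as [Hj0 | Hj1]; [exact Hj0 | exfalso].
  destruct j as [| k]; [lia |].
  pose proof (digit_sum_growing b Hb) as Hgrow.
  pose proof (growing_ineq _ _ Hgrow Hsum (S k)) as Hle.
  pose proof (tech9 _ Hgrow l k ltac:(lia)).
  rewrite tech5 in Hle. unfold digit_term at 2 in Hle. rewrite Hj1 in Hle.
  assert (0 < INR 1 / 2 ^ S k) by (apply Rdiv_lt_0_compat; [simpl; lra | apply pow_lt; lra]).
  lra.
Qed.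

Theorem propositionC1 (x y z : R) (bx by_ bz : nat -> nat) (l : nat) :
  0 <= x <= 1 -> 0 <= y <= 1 -> 0 <= z <= 1 ->
  z = x + y ->
  concise_binary_expansion bz z ->
  concise_binary_expansion bx x ->
  concise_binary_expansion by_ y ->
  ((bx l, by_ l, bz l) = (0%nat, 0%nat, 0%nat) \/
   (bx l, by_ l, bz l) = (0%nat, 1%nat, 1%nat) \/
   (bx l, by_ l, bz l) = (1%nat, 0%nat, 1%nat) \/
   (bx l, by_ l, bz l) = (1%nat, 1%nat, 0%nat)) ->
  (forall j, (j > l)%nat -> bz j = 0%nat) ->
  forall j, (j > l)%nat -> bx j = 0%nat /\ by_ j = 0%nat.
Proof.
  intros _ _ _ Hsum Cz Cx Cy Hdigits Hz.
  assert (Hxy : 2 ^ l * x + 2 ^ l * y = INR (binary_prefix bz l)).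
  { rewrite <- Rmult_plus_distr_l, <- Hsum.
    exact (concise_expansion_terminating bz z l Cz Hz). }
  assert (Hno_carry : Nat.Even (bx l + by_ l + bz l)).
  { destruct Hdigits as [H | [H | [H | H]]]; injection H as -> -> ->;
      [exists 0%nat | exists 1%nat | exists 1%nat | exists 1%nat]; reflexivity. }
  destruct (integral_sum_no_carry _ _ _ _ _
              (concise_expansion_prefix_bounds bx x l Cx)
              (concise_expansion_prefix_bounds by_ y l Cy) Hxy
              (binary_prefix_no_carry bx by_ bz l Hno_carry)) as [Ex Ey].
  intros j Hj. split.
  - exact (concise_expansion_digits_vanish bx x l Cx Ex j Hj).
  - exact (concise_expansion_digits_vanish by_ y l Cy Ey j Hj).
Qed.
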